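(* Let $M$ be a closed surface with a triangulation $\mathcal{T}=(V,E,F)$, $V=\{v_1,\dots,v_N\}$, and let $\Phi:E\to[0,\pi)$ be a weight satisfying condition $\langle\star\rangle$ (see context). Let $R>0$ be a constant. Then there exist positive constants $a_1(\Phi,R)$, $a_2(\Phi,R)$, $a_3(\Phi,R)$, depending only on $\Phi$ and $R$, such that for every hyperbolic circle packing metric $r=(r_1,\dots,r_N)\in\mathbb{R}_{>0}^N$ with $r_i\ge R$ for all $v_i\in V$, one has $a_1\le A_i\le a_2$ for every vertex $v_i$, and $0\le B_{ij}\le a_3$ for all adjacent vertices $v_i,v_j$.
   Context: Weights: write $\Phi_{ij}=\Phi(e_{ij})$ and $I_{ij}=\cos\Phi_{ij}$. Condition $\langle\star\rangle$: for every face $\triangle_{ijk}\in F$, $I_{ij}+I_{ik}I_{jk}\ge0$, $I_{ik}+I_{ij}I_{jk}\ge0$, $I_{jk}+I_{ij}I_{ik}\ge0$. A circle packing metric is $r:V\to(0,\infty)$, $r_i=r(v_i)$ (radius of a circle centered at $v_i$). In hyperbolic background geometry the edge $e_{ij}$ gets length $l_{ij}=\cosh^{-1}(\cosh r_i\cosh r_j+\sinh r_i\sinh r_j\cos\Phi_{ij})$; under $\langle\star\rangle$ the three lengths of each face satisfy the triangle inequalities, so each face $\triangle_{ijk}$ is realized as a hyperbolic triangle; $\theta_i^{jk}\in(0,\pi)$ denotes its inner angle at $v_i$. Set $u_i=\ln\tanh(r_i/2)$ (a diffeomorphism $\mathbb{R}^N_{>0}\to\mathbb{R}^N_{<0}$)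 and regard angles and areas as functions of $u=(u_1,\dots,u_N)$. For an edge $e_{ij}$ with adjacent faces $\triangle_{ijk},\triangle_{ijl}$, define $B_{ij}=\frac{\partial\theta_i^{jk}}{\partial u_j}+\frac{\partial\theta_i^{jl}}{\partial u_j}$, and for a vertex $v_i$ define $A_i=\frac{\partial}{\partial u_i}\Big(\sum_{\triangle_{ijk}\in F}\mathrm{Area}(\triangle_{ijk})\Big)$, the sum over all faces containing $v_i$ (hyperbolic areas). *)

From Stdlib Require Import Reals.
From Coquelicot Require Import Coquelicot.
From mathcomp Require Import ssreflect ssrfun ssrbool eqtype ssrnat seq choice
  fintype finset bigop fingraph.

Set Implicit Arguments. Unset Strict Implicit. Unset Printing Implicit Defensive.

Local Open Scope R_scope.

(* F is the set of faces (simplicial triangulation).                         *)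

Definition adjacent (N : nat) (F : {set {set 'I_N}}) (i j : 'I_N) : bool :=
  (i != j) && [exists k : 'I_N, [set i; j; k] \in F].

Definition link_rel (N : nat) (F : {set {set 'I_N}}) (v : 'I_N) : rel 'I_N :=
  fun a b => [&& a != v, b != v, a != b & [set v; a; b] \in F].

Record closed_surface_triangulation (N : nat) (F : {set {set 'I_N}}) : Prop := {
  tri_card3 : forall f, f \in F -> #|f| = 3%nat;
  tri_cover : forall v : 'I_N, exists2 f, f \in F & v \in f;
  (* no boundary: every edge lies in exactly two faces *)
  tri_edge2 : forall i j : 'I_N, adjacent F i j ->
                #|[set f in F | (i \in f) && (j \in f)]| = 2%nat;
  (* the link of every vertex is connected (so it is a single cycle, and the
     star of each vertex is a disk) *)
  tri_link : forall v a b : 'I_N, adjacent F v a -> adjacent F v b ->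
               connect (link_rel F v) a b;
  tri_conn : forall a b : 'I_N, connect (adjacent F) a b
}.

(* Phi is given on ordered pairs; it must be symmetric with values in [0,pi)
   on edges, Phi_ij = Phi(e_ij). *)
Definition is_weight (N : nat) (F : {set {set 'I_N}}) (Phi : 'I_N -> 'I_N -> R) : Prop :=
  forall i j, adjacent F i j -> Phi i j = Phi j i /\ 0 <= Phi i j < PI.

(* condition <star>: for every face {i,j,k},
   I_ij + I_ik I_jk >= 0 (the three inequalities of the paper are the
   instances of this one under relabelling of the face) *)
Definition star_condition (N : nat) (F : {set {set 'I_N}}) (Phi : 'I_N -> 'I_N -> R) : Prop :=
  forall i j k : 'I_N, [set i; j; k] \in F -> #|[set i; j; k]| = 3%nat ->
    cos (Phi i j) + cos (Phi i k) * cos (Phi j k) >= 0.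

Definition arcosh (x : R) : R := ln (x + sqrt (x * x - 1)).

Definition hlen (N : nat) (Phi : 'I_N -> 'I_N -> R) (r : 'I_N -> R) (i j : 'I_N) : R :=
  arcosh (cosh (r i) * cosh (r j) + sinh (r i) * sinh (r j) * cos (Phi i j)).

(* inner angle theta_i^{jk} at v_i of the hyperbolic triangle with side
   lengths l_ij, l_ik, l_jk (hyperbolic law of cosines) *)
Definition hangle (N : nat) (Phi : 'I_N -> 'I_N -> R) (r : 'I_N -> R) (i j k : 'I_N) : R :=
  let a := hlen Phi r i j in
  let b := hlen Phi r i k in
  let c := hlen Phi r j k in
  acos ((cosh a * cosh b - cosh c) / (sinh a * sinh b)).

(* hyperbolic area of the triangle {i,j,k} (Gauss-Bonnet) *)
Definition harea (N : nat) (Phi : 'I_N -> 'I_N -> R) (r : 'I_N -> R) (i j k : 'I_N) : R :=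
  PI - hangle Phi r i j k - hangle Phi r j i k - hangle Phi r k i j.

Definition u_of_r (N : nat) (r : 'I_N -> R) : 'I_N -> R :=
  fun i => ln (tanh (r i / 2)).
Definition r_of_u (N : nat) (u : 'I_N -> R) : 'I_N -> R :=
  fun i => ln ((1 + exp (u i)) / (1 - exp (u i))).

Definition upd (N : nat) (u : 'I_N -> R) (j : 'I_N) (t : R) : 'I_N -> R :=
  fun k => if k == j then t else u k.

Definition pderiv (N : nat) (g : ('I_N -> R) -> R) (u : 'I_N -> R) (j : 'I_N) : R :=
  Derive (fun t => g (upd u j t)) (u j).

Definition Bcoef (N : nat) (F : {set {set 'I_N}}) (Phi : 'I_N -> 'I_N -> R)
    (u : 'I_N -> R) (i j : 'I_N) : R :=
  \big[Rplus/0]_(k : 'I_N | [set i; j; k] \in F)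
     pderiv (fun w => hangle Phi (r_of_u w) i j k) u j.

(* total area of the faces containing v_i; each face {i,j,k} counted once
   via j < k *)
Definition star_area (N : nat) (F : {set {set 'I_N}}) (Phi : 'I_N -> 'I_N -> R)
    (r : 'I_N -> R) (i : 'I_N) : R :=
  \big[Rplus/0]_(j : 'I_N)
    \big[Rplus/0]_(k : 'I_N | ((j < k)%nat) && ([set i; j; k] \in F))
       harea Phi r i j k.

Definition Acoef (N : nat) (F : {set {set 'I_N}}) (Phi : 'I_N -> 'I_N -> R)
    (u : 'I_N -> R) (i : 'I_N) : R :=
  pderiv (fun w => star_area F Phi (r_of_u w) i) u i.

(* Since u = ln tanh (r / 2) gives du = dr / sinh r, the coefficients are
   sinh r times r-derivatives of angles and areas.  Writing X, Y, Z for the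
   cosh of the sides of a face and G = 1 - X^2 - Y^2 - Z^2 + 2XYZ for its Gram
   determinant, the hyperbolic law of cosines gives the closed forms
     d theta_i / d r_j = sinh r_i M / ((X^2 - 1) sqrt G),
     d Area / d r_i = (sinh r_j M / (X + 1) + sinh r_k M' / (Y + 1)) / sqrt G,
   where M, M' are combinations of products of sinh and cosh of the radii with
   coefficients 1 - I_ij^2, I_jk + I_ij I_ik, I_ik + I_ij I_jk, nonnegative by
   condition <star>.  For radii at least R we have sinh r >= sinh R and
   cosh r <= (1 + 1 / sinh R) sinh r, so G is comparable to
   (sinh r_i sinh r_j sinh r_k)^2 and M to sinh r_i sinh r_j sinh r_k.  These
   factors cancel in the quotients, so every face contributes an amount bounded
   above, and for the area also below by a positive constant, in terms of the
   weights and R only; summing over the finitely many faces gives a1, a2, a3. *)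

From HB Require Import structures.
From Stdlib Require Import Reals Lra Psatz.
From Coquelicot Require Import Coquelicot.
From mathcomp Require Import ssreflect ssrfun ssrbool eqtype ssrnat seq choice
  fintype finset bigop fingraph.

Set Implicit Arguments. Unset Strict Implicit.
Local Open Scope R_scope.

(** * Hyperbolic triangles *)

Lemma cosh_ge1 x : 1 <= cosh x.
Proof.
rewrite /cosh exp_Ropp; have e0 := exp_pos x.
have -> : (exp x + / exp x) / 2 = 1 + (exp x - 1) ^ 2 * / (2 * exp x) by field; lra.
have : 0 <= (exp x - 1) ^ 2 * / (2 * exp x).
  by apply: Rmult_le_pos; [apply: pow2_ge_0 | apply/Rlt_le/Rinv_0_lt_compat; lra].
lra.
Qed.

Lemma sinh_gt0 x : 0 < x -> 0 < sinh x.
Proof. by move=> x0; rewrite -sinh_0; apply: sinh_lt. Qed.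

Lemma sinh_le x y : x <= y -> sinh x <= sinh y.
Proof. by case=> [/sinh_lt/Rlt_le | ->] //; apply: Rle_refl. Qed.

Lemma sinh_le_cosh x : sinh x <= cosh x.
Proof. rewrite /cosh /sinh; have := exp_pos (- x); lra. Qed.

Lemma cosh_le_sinh_add1 x : 0 <= x -> cosh x <= sinh x + 1.
Proof.
move=> x0; rewrite /cosh /sinh.
have : exp (- x) * exp x = 1 by rewrite -exp_plus Rplus_opp_l exp_0.
have := exp_ineq1_le x; have := exp_pos (- x); nra.
Qed.

Lemma cosh_mul_add_sinh_mul x y : cosh x * cosh y + sinh x * sinh y = cosh (x + y).
Proof.
rewrite /cosh /sinh !exp_Ropp exp_plus.
by field; split; apply: Rgt_not_eq; apply: exp_pos.
Qed.

Lemma cosh_mul_sub_sinh_mul x y : cosh x * cosh y - sinh x * sinh y = cosh (x - y).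
Proof.
rewrite /cosh /sinh !exp_Ropp /Rminus exp_plus exp_Ropp.
by field; split; apply: Rgt_not_eq; apply: exp_pos.
Qed.

Lemma cosh_arcosh X : 1 <= X -> cosh (arcosh X) = X.
Proof.
move=> X1; rewrite /arcosh /cosh exp_Ropp.
have S2 : sqrt (X * X - 1) * sqrt (X * X - 1) = X * X - 1 by apply: sqrt_sqrt; nra.
have S0 := sqrt_pos (X * X - 1).
rewrite exp_ln; last lra.
field_simplify_eq; [nra | lra].
Qed.

Lemma sinh_arcosh X : 1 <= X -> sinh (arcosh X) = sqrt (X * X - 1).
Proof.
move=> X1; rewrite /arcosh /sinh exp_Ropp.
have S2 : sqrt (X * X - 1) * sqrt (X * X - 1) = X * X - 1 by apply: sqrt_sqrt; nra.
have S0 := sqrt_pos (X * X - 1).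
rewrite exp_ln; last lra.
field_simplify_eq; [nra | lra].
Qed.

(* [cosh] of the length of the edge joining circles of radii [x] and [y] whose
   weight has cosine [a]. *)
Definition cosh_edge (x y a : R) : R := cosh x * cosh y + sinh x * sinh y * a.

Lemma cosh_edge_sym x y a : cosh_edge x y a = cosh_edge y x a.
Proof. by rewrite /cosh_edge; ring. Qed.

Lemma cosh_edge_sub1_ge x y a : (1 + a) * (sinh x * sinh y) <= cosh_edge x y a - 1.
Proof.
have := cosh_ge1 (x - y); rewrite -cosh_mul_sub_sinh_mul /cosh_edge; lra.
Qed.

Lemma cosh_edge_ge1 x y a : -1 <= a <= 1 -> 1 <= cosh_edge x y a.
Proof.
move=> a1; have := cosh_ge1 (x - y); have := cosh_ge1 (x + y).
rewrite -cosh_mul_sub_sinh_mul -cosh_mul_add_sinh_mul /cosh_edge.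
case: (Rle_dec 0 (sinh x * sinh y)) => P0; nra.
Qed.

Lemma cosh_edge_add1_le x y a : 0 <= x -> 0 <= y -> a <= 1 ->
  cosh_edge x y a + 1 <= 3 * (cosh x * cosh y).
Proof.
move=> x0 y0 a1; rewrite /cosh_edge.
have sx := sinh_le x0; have sy := sinh_le y0; rewrite sinh_0 in sx sy.
have := sinh_le_cosh x; have := sinh_le_cosh y.
have := cosh_ge1 x; have := cosh_ge1 y.
move=> cy cx hy hx.
have : sinh x * sinh y <= cosh x * cosh y by apply: Rmult_le_compat.
have : 1 <= cosh x * cosh y by nra.
have : 0 <= sinh x * sinh y by apply: Rmult_le_pos.
nra.
Qed.

(* Hyperbolic law of cosines: [X], [Y] are the [cosh] of the two sides at a
   vertex and [Z] that of the opposite side. *)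
Definition cos_angle (X Y Z : R) : R :=
  (X * Y - Z) / (sqrt (X * X - 1) * sqrt (Y * Y - 1)).

Definition gram (X Y Z : R) : R := 1 - X * X - Y * Y - Z * Z + 2 * X * Y * Z.

Lemma one_sub_cos_angle_sqr X Y Z : 1 < X -> 1 < Y ->
  1 - (cos_angle X Y Z)² = gram X Y Z / ((X * X - 1) * (Y * Y - 1)).
Proof.
move=> X1 Y1; rewrite /cos_angle /gram /Rsqr.
have p2 : sqrt (X * X - 1) * sqrt (X * X - 1) = X * X - 1 by apply: sqrt_sqrt; nra.
have q2 : sqrt (Y * Y - 1) * sqrt (Y * Y - 1) = Y * Y - 1 by apply: sqrt_sqrt; nra.
have p0 : 0 < sqrt (X * X - 1) by apply: sqrt_lt_R0; nra.
have q0 : 0 < sqrt (Y * Y - 1) by apply: sqrt_lt_R0; nra.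
have -> : 1 - X * X - Y * Y - Z * Z + 2 * X * Y * Z
  = (X * X - 1) * (Y * Y - 1) - (X * Y - Z) * (X * Y - Z) by ring.
set p := sqrt (X * X - 1) in p2 p0 *; set q := sqrt (Y * Y - 1) in q2 q0 *.
rewrite -p2 -q2; field; lra.
Qed.

Lemma is_derive_eq_deriv (f : R -> R) x l l' : is_derive f x l -> l = l' -> is_derive f x l'.
Proof. by move=> H <-. Qed.

Lemma is_derive_cos_angle (X Y Z : R -> R) t dX dY dZ :
  is_derive X t dX -> is_derive Y t dY -> is_derive Z t dZ -> 1 < X t -> 1 < Y t ->
  is_derive (fun s => cos_angle (X s) (Y s) (Z s)) t
    ((dX * Y t + X t * dY - dZ
      - (X t * Y t - Z t) * (X t * dX / (X t * X t - 1) + Y t * dY / (Y t * Y t - 1)))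
     / (sqrt (X t * X t - 1) * sqrt (Y t * Y t - 1))).
Proof.
move=> HX HY HZ X1 Y1; rewrite /cos_angle.
have p0 : 0 < sqrt (X t * X t - 1) by apply: sqrt_lt_R0; nra.
have q0 : 0 < sqrt (Y t * Y t - 1) by apply: sqrt_lt_R0; nra.
have p2 : sqrt (X t * X t - 1) * sqrt (X t * X t - 1) = X t * X t - 1 by apply: sqrt_sqrt; nra.
have q2 : sqrt (Y t * Y t - 1) * sqrt (Y t * Y t - 1) = Y t * Y t - 1 by apply: sqrt_sqrt; nra.
auto_derive.
  have eX : ex_derive X t by exists dX.
  have eY : ex_derive Y t by exists dY.
  have eZ : ex_derive Z t by exists dZ.
  by do !split => //; try nra; apply: Rgt_not_eq; apply: Rmult_lt_0_compat.
rewrite (is_derive_unique _ _ _ HX) (is_derive_unique _ _ _ HY) (is_derive_unique _ _ _ HZ).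
rewrite /Rminus in p0 q0 p2 q2 *.
set p := sqrt _ in p0 p2 *; set q := sqrt _ in q0 q2 *.
rewrite -p2 -q2; field; lra.
Qed.

Lemma is_derive_acos c : -1 < c < 1 -> is_derive acos c (- / sqrt (1 - c²)).
Proof.
move=> c1; apply/is_derive_Reals.
have -> : - / sqrt (1 - c²) = derive_pt acos c (derivable_pt_acos c c1).
  by rewrite derive_pt_acos; field; apply: Rgt_not_eq; apply: sqrt_lt_R0;
     rewrite /Rsqr; nra.
exact: derive_pt_eq_1.
Qed.

Lemma is_derive_acos_cos_angle (X Y Z : R -> R) t dX dY dZ :
  is_derive X t dX -> is_derive Y t dY -> is_derive Z t dZ -> 1 < X t -> 1 < Y t ->
  0 < gram (X t) (Y t) (Z t) ->
  is_derive (fun s => acos (cos_angle (X s) (Y s) (Z s))) t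
    (- (dX * Y t + X t * dY - dZ
        - (X t * Y t - Z t) * (X t * dX / (X t * X t - 1) + Y t * dY / (Y t * Y t - 1)))
     / sqrt (gram (X t) (Y t) (Z t))).
Proof.
move=> HX HY HZ X1 Y1 G0.
have XX : 0 < X t * X t - 1 by nra.
have YY : 0 < Y t * Y t - 1 by nra.
have E := one_sub_cos_angle_sqr (Z t) X1 Y1.
have C2 : 0 < 1 - (cos_angle (X t) (Y t) (Z t))².
  by rewrite E; apply: Rdiv_lt_0_compat => //; apply: Rmult_lt_0_compat.
have C1 : -1 < cos_angle (X t) (Y t) (Z t) < 1 by move: C2; rewrite /Rsqr; nra.
have := is_derive_comp acos (fun s => cos_angle (X s) (Y s) (Z s)) t _ _
  (is_derive_acos C1) (is_derive_cos_angle HX HY HZ X1 Y1).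
rewrite E sqrt_div_alt ?sqrt_mult_alt; try (apply: Rmult_lt_0_compat || apply: Rlt_le); try lra.
have p0 : 0 < sqrt (X t * X t - 1) by apply: sqrt_lt_R0.
have q0 : 0 < sqrt (Y t * Y t - 1) by apply: sqrt_lt_R0.
have g0 : 0 < sqrt (gram (X t) (Y t) (Z t)) by apply: sqrt_lt_R0.
move/is_derive_eq_deriv; apply; rewrite /scal /= /mult /=; field; lra.
Qed.

Definition tri_angle (x y z a b c : R) : R :=
  acos (cos_angle (cosh_edge x y a) (cosh_edge x z b) (cosh_edge y z c)).

Definition tri_gram (x y z a b c : R) : R :=
  gram (cosh_edge x y a) (cosh_edge x z b) (cosh_edge y z c).

(* Condition <star> makes the three coefficients [1 - a * a], [c + a * b] and
   [b + a * c] nonnegative. *)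
Definition dangle_num (x y z a b c : R) : R :=
  sinh x * sinh y * cosh z * (1 - a * a) + sinh x * cosh y * sinh z * (c + a * b)
  + cosh x * sinh y * sinh z * (b + a * c).

(* [tri_angle_dr] is the derivative of the angle at [x] with respect to the
   radius [y], [tri_area_dr] that of the area with respect to [x]. *)
Definition tri_angle_dr (x y z a b c : R) : R :=
  sinh x * dangle_num x y z a b c
  / ((cosh_edge x y a * cosh_edge x y a - 1) * sqrt (tri_gram x y z a b c)).

Definition tri_area_dr (x y z a b c : R) : R :=
  (sinh y * dangle_num x y z a b c / (cosh_edge x y a + 1)
   + sinh z * dangle_num x z y b a c / (cosh_edge x z b + 1)) / sqrt (tri_gram x y z a b c).

Lemma hangle_eq_tri_angle N (Phi : 'I_N -> 'I_N -> R) r i j k :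
  hangle Phi r i j k
  = tri_angle (r i) (r j) (r k) (cos (Phi i j)) (cos (Phi i k)) (cos (Phi j k)).
Proof.
rewrite /hangle /hlen /tri_angle /cos_angle -!/(cosh_edge _ _ _).
by rewrite !cosh_arcosh ?sinh_arcosh //; apply: cosh_edge_ge1; apply: COS_bound.
Qed.

Definition tri_area (x y z a b c : R) : R :=
  PI - tri_angle x y z a b c - tri_angle y x z a c b - tri_angle z x y b c a.

Lemma harea_eq_tri_area N (Phi : 'I_N -> 'I_N -> R) r i j k :
  Phi j i = Phi i j -> Phi k i = Phi i k -> Phi k j = Phi j k ->
  harea Phi r i j k
  = tri_area (r i) (r j) (r k) (cos (Phi i j)) (cos (Phi i k)) (cos (Phi j k)).
Proof. by move=> ji ki kj; rewrite /harea !hangle_eq_tri_angle ji ki kj. Qed.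

Lemma tri_gram_swap12 x y z a b c : tri_gram y x z a c b = tri_gram x y z a b c.
Proof. by rewrite /tri_gram /gram (cosh_edge_sym y x); ring. Qed.

Lemma tri_gram_rot x y z a b c : tri_gram z x y b c a = tri_gram x y z a b c.
Proof. by rewrite /tri_gram /gram (cosh_edge_sym z x) (cosh_edge_sym z y); ring. Qed.

Lemma dangle_num_swap12 x y z a b c : dangle_num y x z a c b = dangle_num x y z a b c.
Proof. by rewrite /dangle_num; ring. Qed.

Ltac exp_field := rewrite /cosh_edge /dangle_num /cosh /sinh !exp_Ropp;
  field; repeat split; apply: Rgt_not_eq; apply: exp_pos.

Lemma dangle_num_identity x y z a b c :
  let X := cosh_edge x y a in let Y := cosh_edge x z b in let Z := cosh_edge y z c in
  (sinh y * cosh z + cosh y * sinh z * c) * (X * X - 1)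
  - (cosh x * sinh y + sinh x * cosh y * a) * (X * Z - Y)
  = sinh x * dangle_num x y z a b c.
Proof. exp_field. Qed.

Lemma darea_num_identity x y z a b c :
  let X := cosh_edge x y a in let Y := cosh_edge x z b in let Z := cosh_edge y z c in
  let dX := sinh x * cosh y + cosh x * sinh y * a in
  let dY := sinh x * cosh z + cosh x * sinh z * b in
  let M := dangle_num x y z a b c in let M' := dangle_num x z y b a c in
  (dX * Y + X * dY) * (X * X - 1) * (Y * Y - 1)
  - (X * Y - Z) * (X * dX * (Y * Y - 1) + Y * dY * (X * X - 1))
  - sinh y * M * (Y * Y - 1) - sinh z * M' * (X * X - 1)
  = sinh y * M * (X - 1) * (Y * Y - 1) + sinh z * M' * (Y - 1) * (X * X - 1).
Proof. exp_field. Qed.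

Lemma tri_gram_expand x y z a b c :
  tri_gram x y z a b c =
    sinh y ^ 2 * sinh z ^ 2 * (1 - c * c) + sinh x ^ 2 * sinh z ^ 2 * (1 - b * b)
  + sinh x ^ 2 * sinh y ^ 2 * (1 - a * a)
  + 2 * sinh x ^ 2 * sinh y ^ 2 * sinh z ^ 2 * (1 + a * b * c)
  + 2 * sinh x ^ 2 * (cosh y * sinh y) * (cosh z * sinh z) * (c + a * b)
  + 2 * sinh y ^ 2 * (cosh x * sinh x) * (cosh z * sinh z) * (b + a * c)
  + 2 * sinh z ^ 2 * (cosh x * sinh x) * (cosh y * sinh y) * (a + b * c).
Proof. rewrite /tri_gram /gram; exp_field. Qed.

Lemma is_derive_cosh_edge_r x y a :
  is_derive (fun t => cosh_edge x t a) y (cosh x * sinh y + sinh x * cosh y * a).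
Proof. by rewrite /cosh_edge /cosh /sinh; auto_derive => //; field. Qed.

Lemma is_derive_cosh_edge_l x y a :
  is_derive (fun t => cosh_edge t y a) x (sinh x * cosh y + cosh x * sinh y * a).
Proof. by rewrite /cosh_edge /cosh /sinh; auto_derive => //; field. Qed.

Section TriangleDerivatives.

Variables x y z a b c : R.
Let X := cosh_edge x y a.
Let Y := cosh_edge x z b.
Let Z := cosh_edge y z c.
Let dX := sinh x * cosh y + cosh x * sinh y * a.
Let dY := sinh x * cosh z + cosh x * sinh z * b.
Hypotheses (X1 : 1 < X) (Y1 : 1 < Y) (G0 : 0 < tri_gram x y z a b c).

Lemma is_derive_tri_angle_r :
  is_derive (fun t => tri_angle x t z a b c) y (tri_angle_dr x y z a b c).
Proof.
have := is_derive_acos_cos_angle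
  (is_derive_cosh_edge_r x y a) (is_derive_const (cosh_edge x z b) y)
  (is_derive_cosh_edge_l y z c) X1 Y1 G0.
move/is_derive_eq_deriv; apply.
have XX : 0 < X * X - 1 by nra.
have g0 : 0 < sqrt (tri_gram x y z a b c) by apply: sqrt_lt_R0.
rewrite /tri_angle_dr -(dangle_num_identity x y z a b c) -/X -/Y -/Z /zero /=.
rewrite /tri_gram -/X -/Y -/Z in g0 *; field; repeat split; nra.
Qed.

Lemma is_derive_tri_angle_l :
  is_derive (fun t => tri_angle t y z a b c) x
    (- (dX * Y + X * dY - (X * Y - Z) * (X * dX / (X * X - 1) + Y * dY / (Y * Y - 1)))
     / sqrt (tri_gram x y z a b c)).
Proof.
have := is_derive_acos_cos_angle
  (is_derive_cosh_edge_l x y a) (is_derive_cosh_edge_l x z b)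
  (is_derive_const (cosh_edge y z c) x) X1 Y1 G0.
by move/is_derive_eq_deriv; apply; rewrite /zero /= Rminus_0_r.
Qed.

End TriangleDerivatives.

Lemma is_derive_tri_area_l x y z a b c :
  let X := cosh_edge x y a in let Y := cosh_edge x z b in let Z := cosh_edge y z c in
  1 < X -> 1 < Y -> 1 < Z -> 0 < tri_gram x y z a b c ->
  is_derive (fun t => tri_area t y z a b c) x (tri_area_dr x y z a b c).
Proof.
move=> X Y Z X1 Y1 Z1 G0.
have Hx := is_derive_tri_angle_l X1 Y1 G0.
have Hy := @is_derive_tri_angle_r y x z a c b
  ltac:(by rewrite cosh_edge_sym) Z1 ltac:(by rewrite tri_gram_swap12).
have Hz := @is_derive_tri_angle_r z x y b c a
  ltac:(by rewrite cosh_edge_sym) ltac:(by rewrite cosh_edge_sym) ltac:(by rewrite tri_gram_rot).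
have := is_derive_minus _ _ _ _ _
  (is_derive_minus _ _ _ _ _ (is_derive_minus _ _ _ _ _ (is_derive_const PI x) Hx) Hy) Hz.
move/is_derive_eq_deriv; apply.
rewrite /tri_angle_dr /tri_area_dr /minus /plus /opp /zero /=.
rewrite (tri_gram_swap12 x y z a b c) (tri_gram_rot x y z a b c) (cosh_edge_sym y x).
rewrite (cosh_edge_sym z x) dangle_num_swap12 (dangle_num_swap12 x z y).
have := darea_num_identity x y z a b c; rewrite -/X -/Y -/Z /= => E.
have XX : 0 < X * X - 1 by nra.
have YY : 0 < Y * Y - 1 by nra.
have g0 : 0 < sqrt (tri_gram x y z a b c) by apply: sqrt_lt_R0.
set dX := sinh x * cosh y + cosh x * sinh y * a in E *.
set dY := sinh x * cosh z + cosh x * sinh z * b in E *.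
set M := dangle_num x y z a b c in E *; set M' := dangle_num x z y b a c in E *.
set g := sqrt _ in g0 *.
rewrite [LHS](_ : _ = ((dX * Y + X * dY) * (X * X - 1) * (Y * Y - 1)
     - (X * Y - Z) * (X * dX * (Y * Y - 1) + Y * dY * (X * X - 1))
     - sinh y * M * (Y * Y - 1) - sinh z * M' * (X * X - 1))
    / ((X * X - 1) * (Y * Y - 1) * g)).
  by rewrite E; field; repeat split; nra.
by field; lra.
Qed.

(** * The coordinates [u] *)

Definition rad_of_u (t : R) : R := ln ((1 + exp t) / (1 - exp t)).

Lemma tanh_bounds x : 0 < x -> 0 < tanh x < 1.
Proof.
move=> x0; rewrite /tanh /sinh /cosh.
have : exp (- x) < exp x by apply: exp_increasing; lra.
have := exp_pos (- x); move=> e lt; split; first by apply: Rdiv_lt_0_compat; lra.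
by apply/Rlt_div_l; lra.
Qed.

Lemma ln_tanh_half_lt0 x : 0 < x -> ln (tanh (x / 2)) < 0.
Proof.
move=> x0; have [t0 t1] := @tanh_bounds (x / 2) ltac:(lra).
by rewrite -ln_1; apply: ln_increasing.
Qed.

Lemma rad_of_uK x : 0 < x -> rad_of_u (ln (tanh (x / 2))) = x.
Proof.
move=> x0; have [t0 _] := @tanh_bounds (x / 2) ltac:(lra).
rewrite /rad_of_u exp_ln //.
have -> : (1 + tanh (x / 2)) / (1 - tanh (x / 2)) = exp x; last exact: ln_exp.
have ex : exp x = exp (x / 2) * exp (x / 2) by rewrite -exp_plus; congr exp; field.
have e0 := exp_pos (x / 2).
rewrite ex /tanh /sinh /cosh exp_Ropp; field; repeat split; nra.
Qed.

Lemma is_derive_rad_of_u t : t < 0 -> is_derive rad_of_u t (sinh (rad_of_u t)).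
Proof.
move=> t0; have e1 : exp t < 1 by rewrite -exp_0; apply: exp_increasing.
have e0 := exp_pos t.
rewrite /rad_of_u; auto_derive.
  do !split => //; [lra | apply: Rdiv_lt_0_compat; lra].
rewrite /sinh exp_Ropp exp_ln; last by apply: Rdiv_lt_0_compat; lra.
by field; lra.
Qed.

Lemma is_derive_comp_rad_of_u (g : R -> R) x d : 0 < x -> is_derive g x d ->
  is_derive (fun t => g (rad_of_u t)) (ln (tanh (x / 2))) (sinh x * d).
Proof.
move=> x0; rewrite -{1 3}(rad_of_uK x0) => Hg.
have := is_derive_comp g rad_of_u _ _ _ Hg (is_derive_rad_of_u (ln_tanh_half_lt0 x0)).
by rewrite rad_of_uK.
Qed.

Lemma r_of_u_upd N (r : 'I_N -> R) j t m : (forall m, 0 < r m) ->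
  r_of_u (upd (u_of_r r) j t) m = if m == j then rad_of_u t else r m.
Proof. by move=> r0; rewrite /r_of_u /upd; case: (m == j) => //; apply: rad_of_uK. Qed.

(** * Uniform bounds on a face *)

Lemma Rdiv_le_compat n d N D : 0 <= n <= N -> 0 < D <= d -> n / d <= N / D.
Proof.
move=> [n0 nN] [D0 Dd]; apply: Rmult_le_compat => //.
  by apply/Rlt_le/Rinv_0_lt_compat; lra.
by apply: Rinv_le_contravar.
Qed.

Lemma mul3_le p q r P Q Rr : 0 <= p <= P -> 0 <= q <= Q -> 0 <= r <= Rr ->
  p * q * r <= P * Q * Rr.
Proof.
move=> [p0 pP] [q0 qQ] [r0 rR].
by apply: Rmult_le_compat => //; [apply: Rmult_le_pos | apply: Rmult_le_compat].
Qed.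

Lemma cos_prod_bounds b c : -1 <= b <= 1 -> -1 <= c <= 1 -> -1 <= b * c <= 1.
Proof. by move=> b1 c1; split; nra. Qed.

Lemma one_add_cos_prod3_gt0 a b c : -1 < a <= 1 -> -1 < b <= 1 -> -1 < c <= 1 ->
  0 < 1 + a * b * c.
Proof.
move=> a1 b1 c1; have bc := @cos_prod_bounds b c ltac:(lra) ltac:(lra).
case: (Rle_lt_dec 0 a) => a0; last nra.
case: (Rle_lt_dec 0 (b * c)) => bc0; first nra.
suff : -1 < b * c by nra.
case: (Rle_lt_dec 0 b) => b0; nra.
Qed.

Definition kappa (R0 : R) : R := 1 + / sinh R0.

Lemma kappa_ge1 R0 : 0 < R0 -> 1 <= kappa R0.
Proof.
move=> R00; have := Rinv_0_lt_compat _ (sinh_gt0 R00); rewrite /kappa; lra.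
Qed.

Lemma cosh_le_kappa_sinh R0 x : 0 < R0 -> R0 <= x -> cosh x <= kappa R0 * sinh x.
Proof.
move=> R00 R0x; have s0 := sinh_gt0 R00; have sx := sinh_le R0x.
have : 1 <= / sinh R0 * sinh x.
  by apply: (Rmult_le_reg_l (sinh R0)) => //; rewrite -Rmult_assoc Rinv_r; lra.
have := @cosh_le_sinh_add1 x ltac:(lra); rewrite /kappa; nra.
Qed.

(* The radii [x], [y], [z] of a face are at least [R0], and [a], [b], [c] are
   the cosines [I_ij], [I_ik], [I_jk] of its weights. *)
Record face_data (R0 x y z a b c : R) : Prop := FaceData {
  fd_R0 : 0 < R0;
  fd_x : R0 <= x; fd_y : R0 <= y; fd_z : R0 <= z;
  fd_a : -1 < a <= 1; fd_b : -1 < b <= 1; fd_c : -1 < c <= 1;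
  fd_star_yz : 0 <= c + a * b; fd_star_xz : 0 <= b + a * c; fd_star_xy : 0 <= a + b * c }.

Lemma face_data_swap23 R0 x y z a b c :
  face_data R0 x y z a b c -> face_data R0 x z y b a c.
Proof. by case=> *; split => //; lra. Qed.

Definition dangle_coef (a b c : R) : R := (1 - a * a) + (c + a * b) + (b + a * c).

Definition gram_const (R0 : R) : R := 3 / sinh R0 ^ 2 + 4 + 12 * kappa R0 ^ 2.

Definition gram_floor (a b c : R) : R := sqrt (2 * (1 + a * b * c)).

Definition dangle_max (R0 a b c : R) : R :=
  5 * kappa R0 ^ 3 / ((1 + a) ^ 2 * gram_floor a b c * sinh R0 ^ 2).

Definition darea_half_max (R0 a b c : R) : R := 5 * kappa R0 ^ 3 / ((1 + a) * gram_floor a b c).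

Definition darea_half_min (R0 a b c : R) : R :=
  dangle_coef a b c / (3 * sqrt (gram_const R0) * kappa R0 ^ 2).

Lemma le_mul_sqr_div s r p u : 0 < r <= s -> 0 <= p -> u <= 1 -> p * u <= s ^ 2 * p / r ^ 2.
Proof.
move=> [r0 rs] p0 u1; suff : 1 <= s ^ 2 / r ^ 2.
  by rewrite /Rdiv Rmult_assoc (Rmult_comm p) -Rmult_assoc; nra.
apply: (Rmult_le_reg_r (r ^ 2)); first by apply: pow_lt.
rewrite /Rdiv Rmult_assoc Rinv_l ?Rmult_1_l ?Rmult_1_r.
  by apply: pow_incr; lra.
by apply: pow_nonzero; lra.
Qed.

Lemma cross_term_le s p q t P Q : 0 <= s -> 0 <= p <= P -> 0 <= q <= Q -> 0 <= t <= 2 ->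
  2 * s * p * q * t <= 4 * (s * P * Q).
Proof.
move=> s0 [p0 pP] [q0 qQ] t2.
have : s * (p * q) <= s * (P * Q) by apply/Rmult_le_compat_l/Rmult_le_compat.
have : 0 <= s * (p * q) by apply/Rmult_le_pos/Rmult_le_pos.
nra.
Qed.

Lemma gram_const_gt0 R0 : 0 < R0 -> 0 < gram_const R0.
Proof.
move=> R00; have := pow2_ge_0 (kappa R0).
have : 0 < / sinh R0 ^ 2 by apply/Rinv_0_lt_compat/pow_lt/sinh_gt0.
by rewrite /gram_const /Rdiv; lra.
Qed.

Section FaceBounds.

Variables R0 x y z a b c : R.
Hypothesis T : face_data R0 x y z a b c.

Let S := sinh x * sinh y * sinh z.
Let k := kappa R0.

Let s0 : 0 < sinh R0. Proof. exact: sinh_gt0 (fd_R0 T). Qed.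
Let sx : sinh R0 <= sinh x. Proof. exact: sinh_le (fd_x T). Qed.
Let sy : sinh R0 <= sinh y. Proof. exact: sinh_le (fd_y T). Qed.
Let sz : sinh R0 <= sinh z. Proof. exact: sinh_le (fd_z T). Qed.
Let hx : sinh x <= cosh x. Proof. exact: sinh_le_cosh. Qed.
Let hy : sinh y <= cosh y. Proof. exact: sinh_le_cosh. Qed.
Let hz : sinh z <= cosh z. Proof. exact: sinh_le_cosh. Qed.
Let kx : cosh x <= k * sinh x. Proof. exact: cosh_le_kappa_sinh (fd_R0 T) (fd_x T). Qed.
Let ky : cosh y <= k * sinh y. Proof. exact: cosh_le_kappa_sinh (fd_R0 T) (fd_y T). Qed.
Let kz : cosh z <= k * sinh z. Proof. exact: cosh_le_kappa_sinh (fd_R0 T) (fd_z T). Qed.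
Let k_ge1 : 1 <= k. Proof. exact: kappa_ge1 (fd_R0 T). Qed.
Let S0 : 0 < S.
Proof. by rewrite /S; apply: Rmult_lt_0_compat; [apply: Rmult_lt_0_compat|]; lra. Qed.

Let a2 : 0 <= 1 - a * a. Proof. by have := fd_a T; nra. Qed.
Let b2 : 0 <= 1 - b * b. Proof. by have := fd_b T; nra. Qed.
Let c2 : 0 <= 1 - c * c. Proof. by have := fd_c T; nra. Qed.

Ltac nonneg := repeat first [lra | apply: pow_le | apply: Rmult_le_pos].

Lemma tri_gram_lower : 2 * (1 + a * b * c) * S ^ 2 <= tri_gram x y z a b c.
Proof.
have [_ _ _ _ _ _ _ yz xz xy] := T.
move: s0 sx sy sz hx hy hz a2 b2 c2 => *.
rewrite tri_gram_expand /S.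
have : 0 <= sinh y ^ 2 * sinh z ^ 2 * (1 - c * c) by nonneg.
have : 0 <= sinh x ^ 2 * sinh z ^ 2 * (1 - b * b) by nonneg.
have : 0 <= sinh x ^ 2 * sinh y ^ 2 * (1 - a * a) by nonneg.
have : 0 <= 2 * sinh x ^ 2 * (cosh y * sinh y) * (cosh z * sinh z) * (c + a * b) by nonneg.
have : 0 <= 2 * sinh y ^ 2 * (cosh x * sinh x) * (cosh z * sinh z) * (b + a * c) by nonneg.
have : 0 <= 2 * sinh z ^ 2 * (cosh x * sinh x) * (cosh y * sinh y) * (a + b * c) by nonneg.
lra.
Qed.

Lemma tri_gram_upper : tri_gram x y z a b c <= gram_const R0 * S ^ 2.
Proof.
have [_ _ _ _ a1 b1 c1 yz xz xy] := T.
have [ab bc ac] : [/\ -1 <= a * b <= 1, -1 <= b * c <= 1 & -1 <= a * c <= 1].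
  by split; apply: cos_prod_bounds; lra.
move: s0 sx sy sz hx hy hz kx ky kz a2 b2 c2 => *.
have [sx2 sy2 sz2] : [/\ 0 <= sinh x ^ 2, 0 <= sinh y ^ 2 & 0 <= sinh z ^ 2] by split; nonneg.
have [px py pz] : [/\ 0 <= cosh x * sinh x <= k * sinh x ^ 2, 0 <= cosh y * sinh y <= k * sinh y ^ 2
  & 0 <= cosh z * sinh z <= k * sinh z ^ 2] by split; split; nra.
rewrite tri_gram_expand /gram_const -/k /S.
have := @le_mul_sqr_div (sinh x) (sinh R0) (sinh y ^ 2 * sinh z ^ 2)
  (1 - c * c) ltac:(lra) ltac:(nonneg) ltac:(nra).
have := @le_mul_sqr_div (sinh y) (sinh R0) (sinh x ^ 2 * sinh z ^ 2)
  (1 - b * b) ltac:(lra) ltac:(nonneg) ltac:(nra).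
have := @le_mul_sqr_div (sinh z) (sinh R0) (sinh x ^ 2 * sinh y ^ 2)
  (1 - a * a) ltac:(lra) ltac:(nonneg) ltac:(nra).
have := @cross_term_le _ _ _ (c + a * b) _ _ sx2 py pz ltac:(lra).
have := @cross_term_le _ _ _ (b + a * c) _ _ sy2 px pz ltac:(lra).
have := @cross_term_le _ _ _ (a + b * c) _ _ sz2 px py ltac:(lra).
have : 2 * (1 + a * b * c) * (sinh x ^ 2 * sinh y ^ 2 * sinh z ^ 2)
       <= 4 * (sinh x ^ 2 * sinh y ^ 2 * sinh z ^ 2).
  apply: Rmult_le_compat_r; first by nonneg.
  by have := @cos_prod_bounds (a * b) c ltac:(lra) ltac:(lra); lra.
rewrite /Rdiv; lra.
Qed.

Let C := cosh x * cosh y * cosh z.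
Let C_le : C <= k ^ 3 * S.
Proof.
rewrite /C /S; move: s0 sx sy sz hx hy hz kx ky kz => *.
have -> : k ^ 3 * (sinh x * sinh y * sinh z) = k * sinh x * (k * sinh y) * (k * sinh z) by ring.
by apply: mul3_le; lra.
Qed.

Lemma dangle_num_bounds : S * dangle_coef a b c <= dangle_num x y z a b c <= 5 * k ^ 3 * S.
Proof.
have [_ _ _ _ a1 b1 c1 yz xz _] := T; move: s0 sx sy sz hx hy hz a2 S0 C_le => *.
have [ab ac] : -1 <= a * b <= 1 /\ -1 <= a * c <= 1 by split; apply: cos_prod_bounds; lra.
have [P1 P2 P3] : [/\ S <= sinh x * sinh y * cosh z <= C, S <= sinh x * cosh y * sinh z <= C
  & S <= cosh x * sinh y * sinh z <= C].
  by rewrite /S /C; do !split; apply: mul3_le; lra.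
rewrite /dangle_num /dangle_coef; split.
  have := Rmult_le_compat_r _ _ _ a2 (proj1 P1).
  have := Rmult_le_compat_r (c + a * b) _ _ yz (proj1 P2).
  have := Rmult_le_compat_r (b + a * c) _ _ xz (proj1 P3).
  lra.
have := @Rmult_le_compat (sinh x * sinh y * cosh z) C (1 - a * a) 1 ltac:(lra) a2 (proj2 P1)
  ltac:(have := Rle_0_sqr a; rewrite /Rsqr; lra).
have := @Rmult_le_compat (sinh x * cosh y * sinh z) C (c + a * b) 2 ltac:(lra) yz (proj2 P2)
  ltac:(lra).
have := @Rmult_le_compat (cosh x * sinh y * sinh z) C (b + a * c) 2 ltac:(lra) xz (proj2 P3)
  ltac:(lra).
lra.
Qed.

Lemma sqrt_tri_gram_bounds :
  0 < gram_floor a b c /\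
  gram_floor a b c * S <= sqrt (tri_gram x y z a b c) <= sqrt (gram_const R0) * S.
Proof.
have [R00 _ _ _ a1 b1 c1 _ _ _] := T; have Spos := S0.
have abc := one_add_cos_prod3_gt0 a1 b1 c1.
have g0 := gram_const_gt0 R00.
have [lo hi] := conj tri_gram_lower tri_gram_upper.
rewrite /gram_floor -[S](sqrt_pow2 S) -?sqrt_mult_alt; try lra.
by split; [apply: sqrt_lt_R0; lra | split; apply: sqrt_le_1_alt].
Qed.

Let coef0 : 0 <= dangle_coef a b c.
Proof. by have [_ _ _ _ _ _ _ yz xz _] := T; have := a2; rewrite /dangle_coef; lra. Qed.

Let X := cosh_edge x y a.
Let G := tri_gram x y z a b c.
Let M := dangle_num x y z a b c.

Let X_sub1 : (1 + a) * (sinh x * sinh y) <= X - 1.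
Proof. exact: cosh_edge_sub1_ge. Qed.

Let a0 : 0 < 1 + a. Proof. by have := fd_a T; lra. Qed.

Let sxy : sinh R0 ^ 2 <= sinh x * sinh y.
Proof. by move: s0 sx sy => *; rewrite /= Rmult_1_r; apply: Rmult_le_compat; lra. Qed.

Lemma dangle_term_bounds : 0 <= sinh y * tri_angle_dr x y z a b c <= dangle_max R0 a b c.
Proof.
rewrite /tri_angle_dr -/X -/G -/M.
have [Ml Mu] := dangle_num_bounds; have [f0 [Gl _]] := sqrt_tri_gram_bounds.
move: s0 sx sy S0 X_sub1 a0 sxy coef0 => ? ? ? Spos Xs ? Ps cf; rewrite -/M -/G in Ml Mu Gl.
set f := gram_floor a b c in f0 Gl *; set P := sinh x * sinh y in Xs Ps *.
have P0 : 0 < P by apply: Rmult_lt_0_compat; lra.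
have M0 : 0 <= M by have := Rmult_le_pos _ _ (Rlt_le _ _ Spos) cf; lra.
have XX : ((1 + a) * P) ^ 2 <= X * X - 1.
  rewrite (_ : X * X - 1 = (X - 1) * (X + 1)) /=; last ring.
  by rewrite Rmult_1_r; apply: Rmult_le_compat; nra.
have [fS PP] : 0 < f * S /\ 0 < ((1 + a) * P) ^ 2.
  by split; [apply: Rmult_lt_0_compat | apply: pow_lt; apply: Rmult_lt_0_compat].
rewrite (_ : sinh y * (sinh x * M / ((X * X - 1) * sqrt G)) = P * M / ((X * X - 1) * sqrt G));
  last by rewrite /P; field; split; apply: Rgt_not_eq; lra.
split; first by apply: Rle_mult_inv_pos; nra.
apply: (Rle_trans _ (P * (5 * k ^ 3 * S) / (((1 + a) * P) ^ 2 * (f * S)))).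
  by apply: Rdiv_le_compat; split; try apply: Rmult_le_compat; nra.
rewrite /dangle_max -/k (_ : P * (5 * k ^ 3 * S) / (((1 + a) * P) ^ 2 * (f * S))
  = 5 * k ^ 3 / ((1 + a) ^ 2 * f * P)); last by field; repeat split; nra.
have k0 : 0 <= k ^ 3 by apply: pow_le; have := k_ge1; lra.
rewrite -/f; apply: Rdiv_le_compat; split; try lra.
  by apply: Rmult_lt_0_compat; [apply: Rmult_lt_0_compat; [apply: pow_lt|] | apply: pow_lt]; lra.
by apply: Rmult_le_compat_l => //; apply: Rmult_le_pos; [apply: pow_le|]; lra.
Qed.

Lemma darea_half_bounds :
  darea_half_min R0 a b c <= sinh x * sinh y * M / ((X + 1) * sqrt G) <= darea_half_max R0 a b c.
Proof.
have [R00 x0 y0 _ [_ a1] _ _ _ _ _] := T.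
have [Ml Mu] := dangle_num_bounds; have [f0 [Gl Gu]] := sqrt_tri_gram_bounds.
have Xu := cosh_edge_add1_le (Rlt_le _ _ (Rlt_le_trans _ _ _ R00 x0))
  (Rlt_le _ _ (Rlt_le_trans _ _ _ R00 y0)) a1.
move: s0 sx sy kx ky S0 X_sub1 a0 coef0 k_ge1 => ? ? ? ? ? Spos Xs ? cf ?.
rewrite -/M -/G -/X in Ml Mu Gl Gu Xu.
set f := gram_floor a b c in f0 Gl *; set P := sinh x * sinh y in Xs *.
set L := sqrt (gram_const R0) in Gu *.
have P0 : 0 < P by apply: Rmult_lt_0_compat; lra.
have L0 : 0 < L by apply/sqrt_lt_R0/gram_const_gt0.
have [fS k2] : 0 < f * S /\ 0 < k ^ 2 by split; [apply: Rmult_lt_0_compat | apply: pow_lt; lra].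
have aP : 0 < (1 + a) * P by apply: Rmult_lt_0_compat.
have M0 : 0 <= M by have := Rmult_le_pos _ _ (Rlt_le _ _ Spos) cf; lra.
have Xk : X + 1 <= 3 * k ^ 2 * P.
  suff : cosh x * cosh y <= k ^ 2 * P by lra.
  by rewrite /P /= Rmult_1_r; nra.
split.
  rewrite /darea_half_min -/k -/L.
  rewrite (_ : dangle_coef a b c / (3 * L * k ^ 2)
              = P * (S * dangle_coef a b c) / (3 * k ^ 2 * P * (L * S)));
    last by field; repeat split; apply: Rgt_not_eq; lra.
  apply: Rdiv_le_compat; split.
  - by apply/Rmult_le_pos/Rmult_le_pos; lra.
  - by apply: Rmult_le_compat_l; lra.
  - by apply: Rmult_lt_0_compat; lra.
  - by apply: Rmult_le_compat; lra.
rewrite /darea_half_max -/k -/f.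
rewrite (_ : 5 * k ^ 3 / ((1 + a) * f) = P * (5 * k ^ 3 * S) / ((1 + a) * P * (f * S)));
  last by field; repeat split; apply: Rgt_not_eq; lra.
apply: Rdiv_le_compat; split.
- by apply: Rmult_le_pos; lra.
- by apply: Rmult_le_compat_l; lra.
- exact: Rmult_lt_0_compat.
- by apply: Rmult_le_compat; lra.
Qed.

End FaceBounds.

Definition darea_min (R0 a b c : R) : R := darea_half_min R0 a b c + darea_half_min R0 b a c.
Definition darea_max (R0 a b c : R) : R := darea_half_max R0 a b c + darea_half_max R0 b a c.

Lemma tri_gram_swap23 x y z a b c : tri_gram x z y b a c = tri_gram x y z a b c.
Proof. by rewrite /tri_gram /gram (cosh_edge_sym z y); ring. Qed.

Lemma darea_bounds R0 x y z a b c : face_data R0 x y z a b c ->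
  darea_min R0 a b c <= sinh x * tri_area_dr x y z a b c <= darea_max R0 a b c.
Proof.
move=> T; rewrite /tri_area_dr.
set M := dangle_num x y z a b c; set M' := dangle_num x z y b a c.
have [f0 [Gl _]] := sqrt_tri_gram_bounds T.
have [lo1 hi1] := darea_half_bounds T; rewrite -/M in lo1 hi1.
have [lo2 hi2] := darea_half_bounds (face_data_swap23 T).
rewrite tri_gram_swap23 -/M' in lo2 hi2.
have [R00 x0 y0 z0 [a0 _] [b0 _] _ _ _ _] := T.
have Spos : 0 < sinh x * sinh y * sinh z.
  by apply: Rmult_lt_0_compat; [apply: Rmult_lt_0_compat|]; apply: sinh_gt0; lra.
have g0 : 0 < sqrt (tri_gram x y z a b c) by have := Rmult_lt_0_compat _ _ f0 Spos; lra.
have [Xs Ys] := conj (cosh_edge_sub1_ge x y a) (cosh_edge_sub1_ge x z b).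
have [sx sy sz] : [/\ 0 < sinh x, 0 < sinh y & 0 < sinh z] by split; apply: sinh_gt0; lra.
have X0 : 0 < cosh_edge x y a + 1 by have := Rmult_le_pos (1 + a) (sinh x * sinh y); nra.
have Y0 : 0 < cosh_edge x z b + 1 by have := Rmult_le_pos (1 + b) (sinh x * sinh z); nra.
rewrite /darea_min /darea_max (_ : sinh x * _ =
  sinh x * sinh y * M / ((cosh_edge x y a + 1) * sqrt (tri_gram x y z a b c))
  + sinh x * sinh z * M' / ((cosh_edge x z b + 1) * sqrt (tri_gram x y z a b c))); first lra.
by field; lra.
Qed.

Lemma dangle_coef_sum_gt0 a b c : -1 < a <= 1 -> -1 < b <= 1 -> -1 < c <= 1 ->
  0 <= c + a * b -> 0 <= b + a * c -> 0 <= a + b * c ->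
  0 < dangle_coef a b c + dangle_coef b a c.
Proof.
move=> a1 b1 c1 yz xz xy; rewrite /dangle_coef.
case: (Rlt_le_dec a 1) => a_lt1; first nra.
case: (Rlt_le_dec b 1) => b_lt1; first nra.
have -> : a = 1 by lra.
have -> : b = 1 by lra.
lra.
Qed.

Lemma darea_min_gt0 R0 x y z a b c : face_data R0 x y z a b c -> 0 < darea_min R0 a b c.
Proof.
case=> R00 _ _ _ a1 b1 c1 yz xz xy; have k1 := kappa_ge1 R00.
have L0 : 0 < sqrt (gram_const R0) by apply/sqrt_lt_R0/gram_const_gt0.
have D0 : 0 < 3 * sqrt (gram_const R0) * kappa R0 ^ 2.
  by apply: Rmult_lt_0_compat; [lra | apply: pow_lt; lra].
rewrite /darea_min /darea_half_min /Rdiv -Rmult_plus_distr_r.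
apply: Rmult_lt_0_compat; last exact: Rinv_0_lt_compat.
apply: dangle_coef_sum_gt0 => //; lra.
Qed.

Lemma face_data_nondegenerate R0 x y z a b c : face_data R0 x y z a b c ->
  [/\ 1 < cosh_edge x y a, 1 < cosh_edge x z b, 1 < cosh_edge y z c
    & 0 < tri_gram x y z a b c].
Proof.
move=> T; have [R00 x0 y0 z0 [a0 _] [b0 _] [c0 _] _ _ _] := T.
have [sx sy sz] : [/\ 0 < sinh x, 0 < sinh y & 0 < sinh z] by split; apply: sinh_gt0; lra.
have := cosh_edge_sub1_ge x y a; have := cosh_edge_sub1_ge x z b.
have := cosh_edge_sub1_ge y z c; have := tri_gram_lower T.
have := one_add_cos_prod3_gt0 (fd_a T) (fd_b T) (fd_c T).
have : 0 < (sinh x * sinh y * sinh z) ^ 2.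
  by apply: pow_lt; apply: Rmult_lt_0_compat; [apply: Rmult_lt_0_compat|].
have [Pxy Pxz Pyz] : [/\ 0 < sinh x * sinh y, 0 < sinh x * sinh z & 0 < sinh y * sinh z].
  by split; apply: Rmult_lt_0_compat.
by split; nra.
Qed.

Lemma dangle_max_ge0 R0 x y z a b c : face_data R0 x y z a b c -> 0 <= dangle_max R0 a b c.
Proof. by move=> T; have := dangle_term_bounds T; lra. Qed.

(** * Summing over the faces *)

Lemma Rplus_associative : associative Rplus.
Proof. by move=> x y z; ring. Qed.

HB.instance Definition _ := Monoid.isComLaw.Build R 0 Rplus Rplus_associative Rplus_comm Rplus_0_l.

Section RealSums.

Variable I : finType.

Lemma big_Rplus_le (P : pred I) (f g : I -> R) :
  (forall i, P i -> f i <= g i) -> \big[Rplus/0]_(i | P i) f i <= \big[Rplus/0]_(i | P i) g i.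
Proof. by move=> fg; apply: (big_ind2 (fun a b => a <= b)) => *; lra || auto. Qed.

Lemma big_Rplus_ge0 (P : pred I) (f : I -> R) :
  (forall i, P i -> 0 <= f i) -> 0 <= \big[Rplus/0]_(i | P i) f i.
Proof. by move=> f0; apply: (big_ind (fun a => 0 <= a)) => *; lra || auto. Qed.

Lemma big_Rplus_ge_term (P : pred I) (f : I -> R) i0 :
  (forall i, P i -> 0 <= f i) -> P i0 -> f i0 <= \big[Rplus/0]_(i | P i) f i.
Proof.
move=> f0 Pi0; rewrite (bigD1 i0) //=.
have : 0 <= \big[Rplus/0]_(i | P i && (i != i0)) f i by apply: big_Rplus_ge0 => i /andP [] /f0.
lra.
Qed.

Lemma big_Rplus_le_full (P : pred I) (f : I -> R) :
  (forall i, 0 <= f i) -> \big[Rplus/0]_(i | P i) f i <= \big[Rplus/0]_i f i.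
Proof.
move=> f0; rewrite big_mkcond /=; apply: big_Rplus_le => i _.
by case: (P i) => /=; [apply: Rle_refl | apply: f0].
Qed.

Lemma is_derive_big_Rplus (P : pred I) (f : I -> R -> R) (df : I -> R) x :
  (forall i, P i -> is_derive (f i) x (df i)) ->
  is_derive (fun t => \big[Rplus/0]_(i | P i) f i t) x (\big[Rplus/0]_(i | P i) df i).
Proof.
move=> fd; rewrite unlock; elim: (index_enum I) => [|i s IH] /=.
  exact: is_derive_const.
by case Pi: (P i) => //; apply: is_derive_plus => //; apply: fd.
Qed.

End RealSums.

Lemma pderiv_hangle N (Phi : 'I_N -> 'I_N -> R) R0 (r : 'I_N -> R) (i j k : 'I_N) :
  (forall m, 0 < r m) -> i != j -> j != k ->
  face_data R0 (r i) (r j) (r k) (cos (Phi i j)) (cos (Phi i k)) (cos (Phi j k)) ->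
  pderiv (fun w => hangle Phi (r_of_u w) i j k) (u_of_r r) j
  = sinh (r j) * tri_angle_dr (r i) (r j) (r k) (cos (Phi i j)) (cos (Phi i k)) (cos (Phi j k)).
Proof.
move=> r0 ij jk T; have [X1 Y1 _ G0] := face_data_nondegenerate T.
set g := fun y => tri_angle (r i) y (r k) (cos (Phi i j)) (cos (Phi i k)) (cos (Phi j k)).
rewrite /pderiv (Derive_ext _ (fun t => g (rad_of_u t))); last first.
  by move=> t; rewrite hangle_eq_tri_angle !r_of_u_upd // (negbTE ij) eqxx eq_sym (negbTE jk).
by apply/is_derive_unique/(is_derive_comp_rad_of_u (g := g)) => //; apply: is_derive_tri_angle_r.
Qed.

Lemma is_derive_harea N (Phi : 'I_N -> 'I_N -> R) R0 (r : 'I_N -> R) (i j k : 'I_N) :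
  (forall m, 0 < r m) -> i != j -> i != k ->
  Phi j i = Phi i j -> Phi k i = Phi i k -> Phi k j = Phi j k ->
  face_data R0 (r i) (r j) (r k) (cos (Phi i j)) (cos (Phi i k)) (cos (Phi j k)) ->
  is_derive (fun t => harea Phi (r_of_u (upd (u_of_r r) i t)) i j k) (u_of_r r i)
    (sinh (r i) * tri_area_dr (r i) (r j) (r k) (cos (Phi i j)) (cos (Phi i k)) (cos (Phi j k))).
Proof.
move=> r0 ij ik ji ki kj T; have [X1 Y1 Z1 G0] := face_data_nondegenerate T.
set g := fun x => tri_area x (r j) (r k) (cos (Phi i j)) (cos (Phi i k)) (cos (Phi j k)).
apply: (is_derive_ext (fun t => g (rad_of_u t))).
  move=> t; rewrite harea_eq_tri_area // !r_of_u_upd // eqxx.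
  by rewrite eq_sym (negbTE ij) eq_sym (negbTE ik).
by apply: (is_derive_comp_rad_of_u (g := g)) => //; apply: is_derive_tri_area_l.
Qed.

Lemma cos_weight_bounds x : 0 <= x < PI -> -1 < cos x <= 1.
Proof.
move=> x0; have [_ c1] := COS_bound x; split => //.
have c2 : 0 < cos (x / 2) by apply: cos_gt_0; lra.
by rewrite (_ : x = 2 * (x / 2)); [rewrite cos_2a_cos; nra | field].
Qed.

Section Triangulation.

Variables (N : nat) (F : {set {set 'I_N}}).
Hypothesis tri : closed_surface_triangulation F.

Lemma face_perm (i j k : 'I_N) :
  [set i; k; j] = [set i; j; k] /\ [set j; k; i] = [set i; j; k].
Proof. by split; apply/setP => v; rewrite !inE; case: (v == i); case: (v == j); case: (v == k). Qed.

Lemma face_neq (i j k : 'I_N) : [set i; j; k] \in F -> [/\ i != j, i != k & j != k].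
Proof.
move/(tri_card3 tri); rewrite setUC cardsU1 cards2 !inE (eq_sym k i) (eq_sym k j).
by case: (i == j); case: (i == k); case: (j == k).
Qed.

Lemma face_adjacent (i j k : 'I_N) : [set i; j; k] \in F -> i != j -> adjacent F i j.
Proof. by move=> f ij; rewrite /adjacent ij; apply/existsP; exists k. Qed.

Lemma exists_face_at (i : 'I_N) : exists j k : 'I_N, ((j < k)%N && ([set i; j; k] \in F)).
Proof.
have [f Ff fi] := tri_cover tri i.
have /cards2P [u [v [uv fuv]]] : #|f :\ i| == 2%nat.
  by move: (tri_card3 tri Ff); rewrite (cardsD1 i f) fi add1n => -[->].
have Ef : f = [set i; u; v].
  by rewrite -(setD1K fi) fuv; apply/setP => w; rewrite !inE orbA.
rewrite Ef in Ff; case: (ltngtP u v) => [uv'|vu|/val_inj uv'].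
- by exists u, v; rewrite uv'.
- by exists v, u; rewrite (proj1 (face_perm i u v)) vu.
- by rewrite uv' eqxx in uv.
Qed.

End Triangulation.

Section Estimates.

Variables (N : nat) (F : {set {set 'I_N}}) (Phi : 'I_N -> 'I_N -> R) (R0 : R).
Hypotheses (tri : closed_surface_triangulation F) (weight : is_weight F Phi)
  (star : star_condition F Phi) (R0_gt0 : 0 < R0).

Lemma face_weight_sym (i j k : 'I_N) : [set i; j; k] \in F ->
  [/\ Phi j i = Phi i j, Phi k i = Phi i k & Phi k j = Phi j k].
Proof.
move=> f; have [ij ik jk] := face_neq tri f; have [p2 p3] := face_perm i j k.
have sym (u v w : 'I_N) : [set u; v; w] \in F -> u != v -> Phi v u = Phi u v.
  by move=> g uv; case: (weight (face_adjacent g uv)).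
split; first exact: sym f ij.
  by apply: (sym i k j) => //; rewrite p2.
by apply: (sym j k i) => //; rewrite p3.
Qed.

Lemma face_data_of_face (r : 'I_N -> R) (i j k : 'I_N) : (forall m, R0 <= r m) ->
  [set i; j; k] \in F ->
  face_data R0 (r i) (r j) (r k) (cos (Phi i j)) (cos (Phi i k)) (cos (Phi j k)).
Proof.
move=> rR f; have [ij ik jk] := face_neq tri f; have [p2 p3] := face_perm i j k.
have [ji ki kj] := face_weight_sym f.
have c3 := tri_card3 tri f.
have cw (u v w : 'I_N) : [set u; v; w] \in F -> u != v -> -1 < cos (Phi u v) <= 1.
  by move=> g uv; case: (weight (face_adjacent g uv)) => _; apply: cos_weight_bounds.
have := star f c3.
have := @star i k j ltac:(by rewrite p2) ltac:(by rewrite p2).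
have := @star j k i ltac:(by rewrite p3) ltac:(by rewrite p3).
rewrite ji ki kj => s1 s2 s3.
split => //; try lra.
- exact: cw f ij.
- by apply: (cw i k j) => //; rewrite p2.
- by apply: (cw j k i) => //; rewrite p3.
Qed.

Definition on_faces (h : R -> R -> R -> R) (i j k : 'I_N) : R :=
  if [set i; j; k] \in F then h (cos (Phi i j)) (cos (Phi i k)) (cos (Phi j k)) else 0.

Definition total (g : 'I_N -> 'I_N -> 'I_N -> R) : R :=
  \big[Rplus/0]_i \big[Rplus/0]_j \big[Rplus/0]_k g i j k.

Lemma on_faces_ge0 (h : R -> R -> R -> R) :
  (forall x y z a b c, face_data R0 x y z a b c -> 0 <= h a b c) ->
  forall i j k, 0 <= on_faces h i j k.
Proof.
move=> h0 i j k; rewrite /on_faces; case: ifP => [f|_]; last exact: Rle_refl.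
by apply: h0; apply: (@face_data_of_face (fun _ => R0)) => // m; apply: Rle_refl.
Qed.

Section Total.

Variable g : 'I_N -> 'I_N -> 'I_N -> R.
Hypothesis g0 : forall i j k, 0 <= g i j k.

Lemma total_ge_sum2 i : \big[Rplus/0]_j \big[Rplus/0]_k g i j k <= total g.
Proof.
apply: (big_Rplus_ge_term (f := fun i => \big[Rplus/0]_j \big[Rplus/0]_k g i j k)) => // i' _.
by apply: big_Rplus_ge0 => j _; apply: big_Rplus_ge0.
Qed.

Lemma total_ge_sum1 i j : \big[Rplus/0]_k g i j k <= total g.
Proof.
apply: (Rle_trans _ _ _ _ (total_ge_sum2 i)).
apply: (big_Rplus_ge_term (f := fun j => \big[Rplus/0]_k g i j k)) => // j' _.
exact: big_Rplus_ge0.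
Qed.

Lemma total_ge_term i j k : g i j k <= total g.
Proof. by apply: (Rle_trans _ _ _ _ (total_ge_sum1 i j)); apply: big_Rplus_ge_term. Qed.

Lemma total_ge0 : 0 <= total g.
Proof. by apply: big_Rplus_ge0 => i _; apply: big_Rplus_ge0 => j _; apply: big_Rplus_ge0. Qed.

End Total.

Lemma on_faces_dangle_max_ge0 i j k : 0 <= on_faces (dangle_max R0) i j k.
Proof. exact: on_faces_ge0 (@dangle_max_ge0 R0) i j k. Qed.

Lemma on_faces_darea_max_ge0 i j k : 0 <= on_faces (darea_max R0) i j k.
Proof.
apply: on_faces_ge0 => x y z a b c T.
by have := darea_bounds T; have := darea_min_gt0 T; lra.
Qed.

Lemma on_faces_inv_darea_min_ge0 i j k :
  0 <= on_faces (fun a b c => / darea_min R0 a b c) i j k.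
Proof.
apply: on_faces_ge0 => x y z a b c T.
exact/Rlt_le/Rinv_0_lt_compat/(darea_min_gt0 T).
Qed.

Variable r : 'I_N -> R.
Hypothesis r_ge : forall m, R0 <= r m.

Let r_gt0 m : 0 < r m.
Proof. by have := r_ge m; lra. Qed.

Lemma Bcoef_bounds (i j : 'I_N) :
  0 <= Bcoef F Phi (u_of_r r) i j <= total (on_faces (dangle_max R0)).
Proof.
have Bk k : [set i; j; k] \in F -> pderiv (fun w => hangle Phi (r_of_u w) i j k) (u_of_r r) j
  = sinh (r j) * tri_angle_dr (r i) (r j) (r k) (cos (Phi i j)) (cos (Phi i k)) (cos (Phi j k)).
  move=> f; have [ij _ jk] := face_neq tri f.
  exact: pderiv_hangle r_gt0 ij jk (face_data_of_face r_ge f).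
rewrite /Bcoef (eq_bigr _ Bk); split.
  by apply: big_Rplus_ge0 => k f; have := dangle_term_bounds (face_data_of_face r_ge f); lra.
have g0 := on_faces_dangle_max_ge0.
apply: (Rle_trans _ _ _ _ (total_ge_sum1 g0 i j)).
apply: (Rle_trans _ _ _ _ (big_Rplus_le_full (fun k => [set i; j; k] \in F) (g0 i j))).
apply: big_Rplus_le => k f; rewrite /on_faces f.
by have := dangle_term_bounds (face_data_of_face r_ge f); lra.
Qed.

Lemma Acoef_eq (i : 'I_N) :
  Acoef F Phi (u_of_r r) i =
  \big[Rplus/0]_(j : 'I_N) \big[Rplus/0]_(k : 'I_N | (j < k)%N && ([set i; j; k] \in F))
    (sinh (r i) * tri_area_dr (r i) (r j) (r k) (cos (Phi i j)) (cos (Phi i k)) (cos (Phi j k))).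
Proof.
rewrite /Acoef /pderiv /star_area; apply: is_derive_unique.
apply: is_derive_big_Rplus => j _; apply: is_derive_big_Rplus => k /andP [_ f].
have [ij ik _] := face_neq tri f; have [ji ki kj] := face_weight_sym f.
exact: is_derive_harea r_gt0 ij ik ji ki kj (face_data_of_face r_ge f).
Qed.

Lemma Acoef_le (i : 'I_N) : Acoef F Phi (u_of_r r) i <= total (on_faces (darea_max R0)).
Proof.
have g0 := on_faces_darea_max_ge0.
rewrite Acoef_eq; apply: (Rle_trans _ _ _ _ (total_ge_sum2 g0 i)).
apply: big_Rplus_le => j _.
apply: (Rle_trans _ _ _ _
  (big_Rplus_le_full (fun k : 'I_N => (j < k)%N && ([set i; j; k] \in F)) (g0 i j))).
apply: big_Rplus_le => k /andP [_ f]; rewrite /on_faces f.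
by have := darea_bounds (face_data_of_face r_ge f); lra.
Qed.

Lemma Acoef_ge (i : 'I_N) :
  / (1 + total (on_faces (fun a b c => / darea_min R0 a b c))) <= Acoef F Phi (u_of_r r) i.
Proof.
have dmin0 x y z a b c := @darea_min_gt0 R0 x y z a b c.
have g0 := on_faces_inv_darea_min_ge0.
have term_ge0 (j k : 'I_N) : (j < k)%N && ([set i; j; k] \in F) ->
    0 <= sinh (r i) * tri_area_dr (r i) (r j) (r k) (cos (Phi i j)) (cos (Phi i k)) (cos (Phi j k)).
  move=> /andP [_ f]; have T := face_data_of_face r_ge f.
  by have := darea_bounds T; have := dmin0 _ _ _ _ _ _ T; lra.
have [j [k jkf]] := exists_face_at tri i; have /andP [_ f] := jkf.
have T := face_data_of_face r_ge f; have m0 := dmin0 _ _ _ _ _ _ T.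
have := total_ge_term g0 i j k; rewrite /on_faces f => inv_le.
apply: (Rle_trans _ (darea_min R0 (cos (Phi i j)) (cos (Phi i k)) (cos (Phi j k)))).
  rewrite -[X in _ <= X]Rinv_inv; apply: Rinv_le_contravar; last lra.
  exact: Rinv_0_lt_compat.
apply: (Rle_trans _ _ _ (proj1 (darea_bounds T))).
apply: (Rle_trans _ _ _ (big_Rplus_ge_term (term_ge0 j) jkf)); rewrite Acoef_eq.
apply: (@big_Rplus_ge_term _ _ _ j) => // j' _.
by apply: big_Rplus_ge0; apply: term_ge0.
Qed.

End Estimates.

Theorem theorem1p1 (N : nat) (F : {set {set 'I_N}}) (Phi : 'I_N -> 'I_N -> R)
    (R0 : R) :
  closed_surface_triangulation F ->
  is_weight F Phi ->
  star_condition F Phi ->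
  0 < R0 ->
  exists a1 a2 a3 : R, 0 < a1 /\ 0 < a2 /\ 0 < a3 /\
    forall r : 'I_N -> R, (forall i, R0 <= r i) ->
      (forall i : 'I_N, a1 <= Acoef F Phi (u_of_r r) i <= a2) /\
      (forall i j : 'I_N, adjacent F i j ->
         0 <= Bcoef F Phi (u_of_r r) i j <= a3).
Proof.
move=> tri weight star R0_gt0.
have LA0 := total_ge0 (on_faces_inv_darea_min_ge0 tri weight star R0_gt0).
have UA0 := total_ge0 (on_faces_darea_max_ge0 tri weight star R0_gt0).
have UB0 := total_ge0 (on_faces_dangle_max_ge0 tri weight star R0_gt0).
exists (/ (1 + total (on_faces F Phi (fun a b c => / darea_min R0 a b c)))),
  (1 + total (on_faces F Phi (darea_max R0))), (1 + total (on_faces F Phi (dangle_max R0))).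
split; first by apply: Rinv_0_lt_compat; lra.
do 2 (split; first lra).
move=> r r_ge; split=> [i | i j _].
  have := Acoef_le tri weight star R0_gt0 r_ge i.
  by have := Acoef_ge tri weight star R0_gt0 r_ge i; lra.
by have := Bcoef_bounds tri weight star R0_gt0 r_ge i j; lra.
Qed.
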